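(* For every temporal oriented tree $\mathcal T$, the connectivity graph $G$ of $\mathcal T$ contains no even hole, i.e., no induced cycle of even length at least $6$.
   Context: A temporal digraph is a pair $(D,\lambda)$ with $D=(V,A)$ a finite digraph and $\lambda:A\to 2^{\{1,\dots,t_{\max}\}}$ giving the time-steps at which each arc is active. A temporal oriented tree $\mathcal T=(T,\lambda)$ is one whose underlying digraph $T$ is an orientation of a tree. A temporal path is a sequence $(v_1,v_2,t_1),\dots,(v_{k-1},v_k,t_{k-1})$ with pairwise distinct $v_i$, $\overrightarrow{v_iv_{i+1}}\in A$, $t_i\in\lambda(\overrightarrow{v_iv_{i+1}})$ and $t_1<\dots<t_{k-1}$. Two vertices $u\ne v$ are temporally connected if there is a temporal path from $u$ to $v$ or from $v$ to $u$. The connectivity graph of $\mathcal T$ is the undirected graph $G$ with $V(G)=V(T)$ and $uv\in E(G)$ iff $u\neq v$ and $u,v$ are temporally connected. *)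

From mathcomp Require Import all_boot.
Set Implicit Arguments. Unset Strict Implicit. Unset Printing Implicit Defensive.

(* A temporal labelling is
   lam : V -> V -> pred nat; lam x y is the set of time-steps at which the
   arc x -> y is active (only meaningful when A x y). *)

Section Temporal.
Variable V : finType.

Definition underlying (A : rel V) : rel V := fun x y => A x y || A y x.

(* a (simple) cycle of length >= 3 in an undirected relation U *)
Definition has_cycle (U : rel V) : Prop :=
  exists (x : V) (s : seq V),
    2 <= size s /\ uniq (x :: s) /\ path U x s /\ U (last x s) x.

Definition oriented_tree (A : rel V) : Prop :=
  [/\ 0 < #|V|,
      (forall x, ~~ A x x),
      (forall x y, A x y -> ~~ A y x),
      (forall x y, connect (underlying A) x y)
    & ~ has_cycle (underlying A)].

(* temporal path from u to v: u = v_1, v_2, ..., v_k = v (given as u :: s),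
   pairwise distinct, with times t_1 < ... < t_(k-1) (the list ts),
   arc v_i -> v_(i+1) present and t_i in lam v_i v_(i+1). *)
Definition temporal_path (A : rel V) (lam : V -> V -> pred nat)
    (u v : V) (s : seq V) (ts : seq nat) : Prop :=
  [/\ uniq (u :: s), last u s = v, size ts = size s,
      sorted ltn ts
    & forall i, i < size s ->
        A (nth u (u :: s) i) (nth u s i) /\
        nth 0 ts i \in lam (nth u (u :: s) i) (nth u s i)].

Definition has_temporal_path A lam (u v : V) : Prop :=
  exists s ts, temporal_path A lam u v s ts.

Definition conn_graph_edge A lam (u v : V) : Prop :=
  u <> v /\ (has_temporal_path A lam u v \/ has_temporal_path A lam v u).

(* (the default x0 of nth is irrelevant since i, j < size c) *)
Definition induced_cycle (E : V -> V -> Prop) (c : seq V) : Prop :=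
  [/\ 3 <= size c, uniq c
    & forall (x0 : V) i j, i < size c -> j < size c ->
        (E (nth x0 c i) (nth x0 c j) <->
         (j == i.+1 %% size c) || (i == j.+1 %% size c))].

End Temporal.

(* Let c_0, ..., c_(n-1) be an induced cycle of the connectivity graph with
   n >= 6.  If temporal paths realising two cycle edges share a vertex z, the
   one reaching z first can be continued along the other, which yields a
   temporal path between endpoints of the two edges; so edges realised through
   a common vertex are at cyclic distance at most 2.  A descent along the tree
   gives a vertex z none of whose branches contains n - 2 consecutive cycle
   vertices; then z is off the cycle and among any n - 3 consecutive edges one
   is realised through z.  This forces n = 6, with the edges i, i+2, i+4
   realised through z and the other three realised avoiding z.  Each of the
   three passages enters z from one branch and leaves into another, and
   consecutive passages share a branch, so the arcs at z would alternate
   between in- and out-arcs around a triangle. *)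

From mathcomp Require Import all_boot zify.
From Stdlib Require Import Classical.
Set Implicit Arguments. Unset Strict Implicit. Unset Printing Implicit Defensive.

Section Avoid.
Variables (V : finType) (e : rel V).

Definition avoid (z : V) : rel V := fun x y => [&& e x y, x != z & y != z].

Lemma avoid_sub z : subrel (avoid z) e.
Proof. by move=> x y /and3P[]. Qed.

Lemma path_avoid_neq z x p : path (avoid z) x p -> forall w, w \in p -> w != z.
Proof.
elim: p x => [|y p IH] x //= /andP[/and3P[_ _ yz] Hp] w.
by rewrite in_cons => /orP[/eqP->//|]; exact: IH Hp w.
Qed.

Lemma path_avoid z x p : path e x p -> z \notin x :: p -> path (avoid z) x p.
Proof.
elim: p x => [|y p IH] x //= /andP[exy Hp].
rewrite !in_cons !negb_or => /and3P[zx zy zp].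
rewrite /avoid exy eq_sym zx eq_sym zy /=; apply: IH => //.
by rewrite in_cons negb_or zy.
Qed.

Lemma connect_avoid_to z x : connect (avoid z) x z -> x = z.
Proof.
case/connectP=> [[|y p]] // Hp /= E.
have : last y p \in y :: p by apply: mem_last.
by rewrite -E => /(path_avoid_neq Hp); rewrite eqxx.
Qed.

Lemma connect_first_step x y :
  connect e x y -> x != y -> exists2 x', e x x' & connect (avoid x) x' y.
Proof.
case/connectP=> p Hp ->; case: (shortenP Hp) => [[|x' p'] Hp' Hu _] {Hp} /=.
  by rewrite eqxx.
case/andP: Hp' => exx Hp _; exists x' => //.
apply/connectP; exists p' => //; apply: path_avoid => //.
by case/andP: Hu.
Qed.

Lemma connect_avoid_sym z : symmetric e -> connect_sym (avoid z).
Proof.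
move=> e_sym; apply: sym_connect_sym => x y; rewrite /avoid e_sym.
by case: (e y x); case: (x != z); case: (y != z).
Qed.

End Avoid.

Section TreeBranches.
Variables (V : finType) (U : rel V).
Hypotheses (U_sym : symmetric U) (U_irr : irreflexive U) (U_acyclic : ~ has_cycle U).

Definition branch (z a : V) : {set V} := [set v | connect (avoid U z) a v].

Lemma adj_neq x y : U x y -> x != y.
Proof. by apply: contraTneq => ->; rewrite U_irr. Qed.

Lemma branch_uniq z a a' : U z a -> U z a' -> connect (avoid U z) a a' -> a = a'.
Proof.
move=> za za' /connectP[p Hp Hw].
case: (shortenP Hp) Hw => p' Hp' Hu Hsub Hw.
case: (eqVneq a a') => // aa'; exfalso; apply: U_acyclic.
exists z, (a :: p'); split; last split; last split.
- by case: p' Hw {Hp' Hu Hsub} => [/= E|//]; rewrite E eqxx in aa'.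
- rewrite /= in_cons negb_or (adj_neq za) /=; move: Hu => /= ->; rewrite andbT.
  by apply/negP => /Hsub /(path_avoid_neq Hp); rewrite eqxx.
- by rewrite /= za /=; apply: sub_path Hp'; exact: avoid_sub.
- by rewrite /= -Hw U_sym.
Qed.

Lemma branch_eq z a a' v : U z a -> U z a' ->
  connect (avoid U z) a v -> connect (avoid U z) a' v -> a = a'.
Proof.
move=> za za' av a'v; apply: branch_uniq za za' _.
by apply: connect_trans av _; rewrite connect_avoid_sym.
Qed.

Lemma branches_disjoint z a v : U z a ->
  connect (avoid U z) a v -> connect (avoid U a) z v -> False.
Proof.
move=> za av zv.
have a_v : a != v.
  apply: contraPneq zv => <- /connect_avoid_to za_eq.
  by move: (adj_neq za); rewrite za_eq eqxx.
have [a' /and3P[aa' _ a'z] a'v] := connect_first_step av a_v.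
have a'v_a : connect (avoid U a) a' v.
  apply: connect_sub a'v => x y /and3P[/and3P[xy _ _] xa ya].
  by apply: connect1; rewrite /avoid xy xa ya.
suff a'_z : a' = z by rewrite a'_z eqxx in a'z.
by apply: branch_eq aa' _ a'v_a zv; rewrite U_sym.
Qed.

Lemma branch_proper z a b : U z a -> U a b -> b != z ->
  branch a b \proper branch z a.
Proof.
move=> za ab bz; apply/properP; split.
  apply/subsetP => v; rewrite !inE => /connectP[p Hp ->].
  have zp : z \notin b :: p.
    apply: contra bz => /(path_connect Hp) bz_conn.
    by rewrite -(branch_eq ab _ bz_conn (connect0 _ z)) // U_sym.
  apply/connectP; exists (b :: p) => //; apply: path_avoid.
    by rewrite /= ab /=; apply: sub_path Hp; exact: avoid_sub.
  by rewrite in_cons negb_or zp andbT adj_neq.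
exists a; first by rewrite inE connect0.
by rewrite inE; apply/negP => /connect_avoid_to ba; rewrite ba U_irr in ab.
Qed.

End TreeBranches.

Section TemporalWalks.
Variables (V : finType) (A : rel V) (lam : V -> V -> pred nat).

Fixpoint twalk (u : V) (t0 : nat) (s : seq V) (ts : seq nat) : Prop :=
  match s, ts with
  | [::], [::] => True
  | v :: s', t :: ts' => [/\ A u v, t \in lam u v, t0 < t & twalk v t s' ts']
  | _, _ => False
  end.

Lemma twalk_weaken u t0 t1 s ts : t0 <= t1 -> twalk u t1 s ts -> twalk u t0 s ts.
Proof.
by case: s ts => [|v s] [|t ts] //= le [uv tuv lt_t W]; split => //; lia.
Qed.

Lemma twalk_path u t0 s ts : twalk u t0 s ts -> path A u s.
Proof.
elim: s u t0 ts => [|v s IH] u t0 [|t ts] //= [uv _ _ W].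
by rewrite uv; exact: IH W.
Qed.

Lemma twalk_last_time u t0 s ts : twalk u t0 s ts -> t0 <= last t0 ts.
Proof.
elim: s u t0 ts => [|v s IH] u t0 [|t ts] //= [_ _ lt_t W].
by have := IH _ _ _ W; lia.
Qed.

Lemma twalk_cat u t0 p q tp tq :
  twalk u t0 p tp -> twalk (last u p) (last t0 tp) q tq ->
  twalk u t0 (p ++ q) (tp ++ tq).
Proof.
elim: p u t0 tp => [|v p IH] u t0 [|t tp] //= [uv tuv lt_t W] Wq.
by split => //; exact: IH.
Qed.

Lemma twalk_cat_split u t0 p q ts : twalk u t0 (p ++ q) ts ->
  exists tp tq, [/\ ts = tp ++ tq, twalk u t0 p tp &
                    twalk (last u p) (last t0 tp) q tq].
Proof.
elim: p u t0 ts => [|v p IH] u t0 ts /=; first by exists [::], ts.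
case: ts => [|t ts] //= [uv tuv lt_t /IH[tp [tq [-> Wp Wq]]]].
by exists (t :: tp), tq.
Qed.

Lemma twalk_split_at u t0 s ts z : twalk u t0 s ts -> z \in u :: s ->
  exists p q tp tq, [/\ twalk u t0 p tp, last u p = z,
                        twalk z (last t0 tp) q tq & last z q = last u s].
Proof.
move=> W; rewrite in_cons => /orP[/eqP->|z_s]; first by exists [::], s, [::], ts.
case/splitPr: z_s W => s1 s2; rewrite -cat_rcons => /twalk_cat_split[tp [tq [_ Wp]]].
rewrite last_rcons => Wq.
by exists (rcons s1 z), s2, tp, tq; rewrite last_cat !last_rcons.
Qed.

Lemma twalk_shorten u t0 s ts : twalk u t0 s ts ->
  exists s' ts', [/\ uniq (u :: s'), last u s' = last u s,
                     {subset s' <= s} & twalk u t0 s' ts'].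
Proof.
elim: {s}(size s) {-2}s (leqnn (size s)) u t0 ts => [|m IH] s le_m u t0 ts.
  by case: s le_m => // _; case: ts => // _; exists [::], [::].
case: (boolP (u \in s)) => [u_s|u_s].
  (* cut out the closed subwalk from u back to u *)
  case/splitPr: u_s le_m => s1 s2 le_m.
  case/twalk_cat_split=> tp [[|t tq] [_ Wp]] //= [_ _ lt_t Wq].
  have Wq' : twalk u t0 s2 tq.
    by apply: twalk_weaken Wq; have := twalk_last_time Wp; lia.
  have [|s' [ts' [U' L' S' W']]] := IH s2 _ u t0 tq Wq'.
    by move: le_m; rewrite size_cat /=; lia.
  exists s', ts'; split => //; first by rewrite L' last_cat.
  by move=> w /S' w_s2; rewrite mem_cat in_cons w_s2 !orbT.
case: s ts le_m u_s => [|v s] [|t ts] //=; first by exists [::], [::].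
rewrite in_cons negb_or => le_m /andP[uv_neq u_s] [uv tuv lt_t W].
have [s' [ts' [U' L' S' W']]] := IH s le_m v t ts W.
exists (v :: s'), (t :: ts'); split => //.
- move: U'; rewrite !cons_uniq in_cons negb_or uv_neq => /andP[-> ->].
  by rewrite !andbT; apply: contra u_s => /S'.
- by move=> w; rewrite !in_cons => /orP[->//|/S'->]; rewrite orbT.
Qed.

Lemma twalk_nthP u t0 s ts : twalk u t0 s ts <->
  [/\ size ts = size s, path ltn t0 ts &
      forall i, i < size s ->
        A (nth u (u :: s) i) (nth u s i) /\
        nth 0 ts i \in lam (nth u (u :: s) i) (nth u s i)].
Proof.
elim: s u t0 ts => [|v s IH] u t0 [|t ts] /=; try by split=> // [[]].
have nth_v i : i < size s ->
    nth u (v :: s) i = nth v (v :: s) i /\ nth u s i = nth v s i.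
  by move=> lt_i; split; apply: set_nth_default => /=; lia.
split.
- move=> [uv tuv lt_t /IH[sz P N]]; split; [by rewrite sz | by rewrite lt_t |].
  case=> [|i] //= lt_i; have [-> ->] := nth_v i lt_i; exact: N.
- move=> [[sz] /andP[lt_t P] N]; have [uv tuv] := N 0 isT.
  split => //; apply/IH; split => // i lt_i.
  by have := N i.+1 lt_i; have [/= <- <-] := nth_v i lt_i.
Qed.

(* A [twalk u 0] only uses times > 0, so it matches temporal paths only under
   this hypothesis. *)
Hypothesis lam_pos : forall x y t, A x y -> t \in lam x y -> 0 < t.

Lemma temporal_pathP u v s ts : temporal_path A lam u v s ts <->
  [/\ uniq (u :: s), last u s = v & twalk u 0 s ts].
Proof.
split.
- case=> U L sz srt N; split => //; apply/twalk_nthP; split => //.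
  case: s ts sz srt N {U L} => [|x s] [|t ts] //= _ srt N.
  by rewrite srt andbT; have [/lam_pos] := N 0 isT; apply.
- case=> U L /twalk_nthP[sz P N]; split => //.
  by case: ts P {sz N} => [|t ts] //= /andP[].
Qed.

Lemma twalk_has_temporal_path u s ts :
  twalk u 0 s ts -> has_temporal_path A lam u (last u s).
Proof.
case/twalk_shorten=> s' [ts' [U' L' _ W']].
by exists s', ts'; apply/temporal_pathP.
Qed.

Lemma has_temporal_path_twalk u v : has_temporal_path A lam u v ->
  exists s ts, [/\ uniq (u :: s), last u s = v & twalk u 0 s ts].
Proof. by case=> s [ts /temporal_pathP P]; exists s, ts. Qed.

Lemma twalk_mem_has_temporal_path u s ts z : twalk u 0 s ts -> z \in u :: s ->
  has_temporal_path A lam u z /\ has_temporal_path A lam z (last u s).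
Proof.
move=> W /(twalk_split_at W)[p [q [tp [tq [Wp <- Wq <-]]]]].
split; apply: twalk_has_temporal_path; first exact: Wp.
exact: twalk_weaken Wq.
Qed.

(* Whichever walk passes z first can be continued along the other one. *)
Lemma twalk_meet a s ts b r rs z : twalk a 0 s ts -> twalk b 0 r rs ->
  z \in a :: s -> z \in b :: r ->
  has_temporal_path A lam a (last b r) \/ has_temporal_path A lam b (last a s).
Proof.
move=> W1 W2 /(twalk_split_at W1)[p [q [tp [tq [Wp Lp Wq Lq]]]]].
move=> /(twalk_split_at W2)[p' [q' [tp' [tq' [Wp' Lp' Wq' Lq']]]]].
case: (leqP (last 0 tp) (last 0 tp')) => le_t.
- left; rewrite -Lq' -Lp -(last_cat a p q'); apply: twalk_has_temporal_path.
  by apply: twalk_cat Wp _; rewrite Lp; exact: twalk_weaken Wq'.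
- right; rewrite -Lq -Lp' -(last_cat b p' q); apply: twalk_has_temporal_path.
  by apply: twalk_cat Wp' _; rewrite Lp'; apply: twalk_weaken Wq; lia.
Qed.

End TemporalWalks.

Lemma neq_modDl n a f g : f < n -> g < n -> f != g -> (a + f) %% n != (a + g) %% n.
Proof. by move=> lt_f lt_g fg; rewrite eqn_modDl !modn_small. Qed.

Lemma windows_meet n i i' : 5 <= n ->
  exists l l', [/\ l < n - 2, l' < n - 2 & i + l = i' + l' %[mod n]].
Proof.
move=> n5; have lt_mod k : k %% n < n by apply: ltn_pmod; lia.
suff [l [l' [lt_l lt_l' meet]]] : exists l l', [/\ l < n - 2, l' < n - 2 &
    [\/ i %% n + l = i' %% n + l', i %% n + l + n = i' %% n + l'
      | i %% n + l = i' %% n + l' + n]].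
  exists l, l'; split => //; rewrite -modnDml -(modnDml i').
  by case: meet => [->|<-|->]; rewrite ?modnDr.
have := lt_mod i; have := lt_mod i'.
case: (leqP (i %% n) (i' %% n)) => le_ii' lt_i' lt_i.
- case: (ltnP (i' %% n - i %% n) (n - 2)) => d.
  + by exists (i' %% n - i %% n), 0; split; [lia | lia | apply: Or31; lia].
  + by exists 0, (n - (i' %% n - i %% n)); split; [lia | lia | apply: Or32; lia].
- case: (ltnP (i %% n - i' %% n) (n - 2)) => d.
  + by exists 0, (i %% n - i' %% n); split; [lia | lia | apply: Or31; lia].
  + by exists (n - (i %% n - i' %% n)), 0; split; [lia | lia | apply: Or33; lia].
Qed.

Lemma window_hitting_pattern n (P : nat -> Prop) : 6 <= n ->
  (forall i, exists2 l, l < n - 3 & P (i + l)) ->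
  (forall p q, p <= q -> 3 <= q - p <= n - 3 -> P p -> P q -> False) ->
  exists i, [/\ n = 6, P i, P (i + 2), P (i + 4) &
            [/\ ~ P (i + 1), ~ P (i + 3) & ~ P (i + 5)]].
Proof.
move=> n6 hit sparse.
have apart p q : P p -> P q -> ~ (p <= q /\ 3 <= q - p <= n - 3).
  by move=> Pp Pq [pq d]; exact: sparse pq d Pp Pq.
have [l0 lt_l0 P0] := hit 0; rewrite add0n in P0.
have [l1 lt_l1 P1] := hit (l0 + 1).
have [l2 lt_l2 P2] := hit (l0 + 2).
have [l3 lt_l3 P3] := hit (l0 + 3).
have bounds : l1 <= 1 /\ (l2 = 0 \/ l2 = n - 4) /\ n - 5 <= l3.
  by move: (apart _ _ P0 P1) (apart _ _ P0 P2) (apart _ _ P0 P3); lia.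
have [n6E [l1E l3E]] : n = 6 /\ l1 = 1 /\ l3 = 1.
  move: (apart _ _ P1 P2) (apart _ _ P2 P1) (apart _ _ P1 P3).
  by move: (apart _ _ P2 P3) (apart _ _ P3 P2); lia.
have Q2 : P (l0 + 2) by rewrite -addnA l1E in P1.
have Q4 : P (l0 + 4) by rewrite -addnA l3E in P3.
exists l0; split=> //; split=> [P1'|P3'|P5'].
- by apply: (apart _ _ P1' Q4); lia.
- by apply: (apart _ _ P0 P3'); lia.
- by apply: (apart _ _ Q2 P5'); lia.
Qed.

Section LongHoles.
Variables (V : finType) (A : rel V) (lam : V -> V -> pred nat) (c : seq V) (x0 : V).
Hypotheses (A_irr : forall x, ~~ A x x) (A_anti : forall x y, A x y -> ~~ A y x).
Hypotheses (A_conn : forall x y, connect (underlying A) x y)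
           (A_acyclic : ~ has_cycle (underlying A)).
Hypothesis lam_pos : forall x y t, A x y -> t \in lam x y -> 0 < t.
Hypotheses (c_hole : induced_cycle (conn_graph_edge A lam) c) (c_long : 6 <= size c).

Local Notation U := (underlying A).
Local Notation n := (size c).

Let U_sym : symmetric U.
Proof. by move=> x y; rewrite /underlying orbC. Qed.

Let U_irr : irreflexive U.
Proof. by move=> x; rewrite /underlying orbb (negbTE (A_irr x)). Qed.

Let A_U : subrel A U.
Proof. by move=> x y xy; rewrite /underlying xy. Qed.

Definition cv (j : nat) : V := nth x0 c (j %% n).

Lemma cv_mod j k : j = k %[mod n] -> cv j = cv k.
Proof. by rewrite /cv => ->. Qed.

Lemma cv_inj j k : cv j = cv k -> j = k %[mod n].
Proof.
case: c_hole => _ uniq_c _ /eqP; have n_gt0 : 0 < n by lia.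
by rewrite /cv nth_uniq ?ltn_pmod // => /eqP.
Qed.

Lemma cv_neq_succ j : cv j != cv j.+1.
Proof.
apply/eqP => /cv_inj/eqP; rewrite -(addn1 j) -{1}(addn0 j).
by apply/negP; apply: neq_modDl; lia.
Qed.

Lemma cv_adjacent i j : conn_graph_edge A lam (cv i) (cv j) <->
  (j %% n == (i %% n).+1 %% n) || (i %% n == (j %% n).+1 %% n).
Proof. by case: c_hole => _ _ adj; apply: adj; rewrite ltn_pmod //; lia. Qed.

Lemma cv_far a b : a <= b -> 2 <= b - a <= n - 2 ->
  ~ has_temporal_path A lam (cv a) (cv b) /\ ~ has_temporal_path A lam (cv b) (cv a).
Proof.
move=> le_ab d; have [f -> {b le_ab d} f_bounds] : exists2 f, b = a + f & 2 <= f <= n - 2.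
  by exists (b - a); lia.
have neq : cv a <> cv (a + f).
  by move/cv_inj/eqP; rewrite -{1}(addn0 a); apply/negP; apply: neq_modDl; lia.
have not_adj : ~~ (((a + f) %% n == (a %% n).+1 %% n) ||
                   (a %% n == ((a + f) %% n).+1 %% n)).
  have h1 : (a + f) %% n != (a + 1) %% n by apply: neq_modDl; lia.
  have h2 : (a + 0) %% n != (a + (f + 1)) %% n by apply: neq_modDl; lia.
  rewrite -(addn1 (a %% n)) -(addn1 ((a + f) %% n)) !modnDml -addnA negb_or h1.
  by rewrite addn0 in h2.
split=> P; move/negP: not_adj; apply.
- by apply/(cv_adjacent a (a + f)); split=> //; left.
- by rewrite orbC; apply/(cv_adjacent (a + f) a); split=> [/esym //|]; left.
Qed.

Definition edge_ends i (u v : V) :=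
  (u = cv i /\ v = cv i.+1) \/ (u = cv i.+1 /\ v = cv i).

Lemma edge_walk i : exists u v s ts,
  [/\ edge_ends i u v, uniq (u :: s), last u s = v & twalk A lam u 0 s ts].
Proof.
have [_] : conn_graph_edge A lam (cv i) (cv i.+1).
  by apply/cv_adjacent; rewrite -[(i %% n).+1]addn1 modnDml addn1 eqxx.
case=> /(has_temporal_path_twalk lam_pos)[s [ts [uniq_s L W]]].
- by exists (cv i), (cv i.+1), s, ts; split=> //; left.
- by exists (cv i.+1), (cv i), s, ts; split=> //; right.
Qed.

Definition through (z : V) (i : nat) := exists u v s ts,
  [/\ edge_ends i u v, uniq (u :: s), last u s = v, twalk A lam u 0 s ts & z \in u :: s].

Lemma through_far z p q : p <= q -> 3 <= q - p <= n - 3 ->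
  through z p -> through z q -> False.
Proof.
move=> le_pq d [u [v [s [ts [E _ L W z_s]]]]] [u' [v' [s' [ts' [E' _ L' W' z_s']]]]].
have no_path a b : a \in [:: p; p.+1] -> b \in [:: q; q.+1] ->
    ~ has_temporal_path A lam (cv a) (cv b) /\ ~ has_temporal_path A lam (cv b) (cv a).
  by rewrite !inE => /orP[]/eqP-> /orP[]/eqP->; apply: cv_far; lia.
have := twalk_meet lam_pos W W' z_s z_s'; rewrite L L'.
case: E => [[-> ->]|[-> ->]]; case: E' => [[-> ->]|[-> ->]];
  case=> P; first [ by apply: (no_path _ _ _ _).1 P; rewrite !inE eqxx ?orbT
                  | by apply: (no_path _ _ _ _).2 P; rewrite !inE eqxx ?orbT ].
Qed.

Lemma cv_not_through j l : 1 <= l <= n - 2 -> ~ through (cv j) (j + l).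
Proof.
move=> hl [u [v [s [ts [E _ L W z_s]]]]].
have [to_cj] := twalk_mem_has_temporal_path lam_pos W z_s; rewrite L => from_cj.
rewrite (@cv_mod j (j + n)) ?modnDr // in to_cj from_cj.
case: (leqP 2 l) => l2.
- have [no_to no_from] := @cv_far (j + l) (j + n) ltac:(lia) ltac:(lia).
  by case: E => [[Eu Ev]|[Eu Ev]]; rewrite Eu Ev in to_cj from_cj;
    [exact: no_to | exact: no_from].
- have [no_to no_from] := @cv_far (j + l).+1 (j + n) ltac:(lia) ltac:(lia).
  by case: E => [[Eu Ev]|[Eu Ev]]; rewrite Eu Ev in to_cj from_cj;
    [exact: no_from | exact: no_to].
Qed.

Lemma not_through_connect z i : ~ through z i -> connect (avoid U z) (cv i) (cv i.+1).
Proof.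
move=> not_th; have [u [v [s [ts [E uniq_s L W]]]]] := edge_walk i.
have z_s : z \notin u :: s by apply/negP => z_s; apply: not_th; exists u, v, s, ts.
have uv : connect (avoid U z) u v.
  apply/connectP; exists s => //; apply: path_avoid _ z_s.
  exact: sub_path A_U _ _ (twalk_path W).
by case: E uv => [[-> ->]|[-> ->]] //; rewrite connect_avoid_sym.
Qed.

Lemma not_through_run z i m : (forall l, l < m -> ~ through z (i + l)) ->
  forall l, l <= m -> connect (avoid U z) (cv i) (cv (i + l)).
Proof.
move=> not_th; elim=> [|l IH] le_lm; first by rewrite addn0 connect0.
apply: connect_trans (IH (ltnW le_lm)) _; rewrite addnS.
exact: not_through_connect (not_th l le_lm).
Qed.

Lemma through_turn z i : (forall j, z != cv j) -> through z i ->
  exists l r, [/\ U z l, U z r, connect (avoid U z) l (cv i),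
                  connect (avoid U z) r (cv i.+1) & A l z != A r z].
Proof.
move=> off [u [v [s [ts [E uniq_s L W z_s]]]]].
have [zu zv] : z != u /\ z != v by case: E => [[-> ->]|[-> ->]].
move: z_s; rewrite in_cons (negbTE zu) /= => z_s.
case/splitPr: z_s uniq_s L W => s1 [|q s2] uniq_s L W.
  by rewrite last_cat /= in L; rewrite L eqxx in zv.
have := twalk_path W; rewrite cat_path /= => /and4P[P1 in_z out_z P2].
rewrite -cat_cons cat_uniq in uniq_s; case/and3P: uniq_s => _ disj uniq2.
have z_s1 : z \notin u :: s1.
  by apply: contra disj => z_s1; apply/hasP; exists z; rewrite ?inE ?eqxx.
have z_s2 : z \notin q :: s2 by case/andP: uniq2.
have l_u : connect (avoid U z) (last u s1) u.
  rewrite connect_avoid_sym //; apply/connectP; exists s1 => //.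
  by apply: path_avoid _ z_s1; apply: sub_path A_U _ _ P1.
have q_v : connect (avoid U z) q v.
  apply/connectP; exists s2; last by rewrite -L last_cat.
  by apply: path_avoid _ z_s2; apply: sub_path A_U _ _ P2.
have zl : U z (last u s1) by rewrite U_sym; apply: A_U.
have zq : U z q by apply: A_U.
have turn : A (last u s1) z != A q z by rewrite in_z (negbTE (A_anti out_z)).
case: E => [[Eu Ev]|[Eu Ev]].
- by exists (last u s1), q; rewrite -Eu -Ev.
- by exists q, (last u s1); rewrite -Eu -Ev eq_sym.
Qed.

Definition big_branch (z a : V) :=
  U z a /\ exists i, forall l, l < n - 2 -> cv (i + l) \in branch U z a.

Lemma big_branch_back z a b : big_branch z a -> big_branch a b -> b != z.
Proof.
move=> [za [i in_za]] [ab [i' in_ab]]; apply/eqP => bz; rewrite bz in in_ab.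
have [l [l' [lt_l lt_l' meet]]] := windows_meet i i' (ltnW c_long).
have := in_ab l' lt_l'; have := in_za l lt_l; rewrite !inE (cv_mod meet).
move=> av zv; exact: (branches_disjoint U_sym U_irr A_acyclic za av zv).
Qed.

Lemma exists_small_center : exists z, forall a, ~ big_branch z a.
Proof.
apply: NNPP => no_small.
have big z : exists a, big_branch z a.
  by apply: NNPP => no_big; apply: no_small; exists z => a big_a; apply: no_big; exists a.
suff small m z a : #|branch U z a| < m -> ~ big_branch z a.
  by have [a big_a] := big x0; exact: small _ _ _ (ltnSn _) big_a.
elim: m z a => [//|m IH] z a lt_m big_a.
have [b big_b] := big a.
have shrink :=
  branch_proper U_sym U_irr A_acyclic big_a.1 big_b.1 (big_branch_back big_a big_b).
by apply: IH big_b; apply: leq_trans (proper_card shrink) _; rewrite -ltnS.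
Qed.

Lemma window_through z i : (forall a, ~ big_branch z a) -> z != cv i ->
  exists2 l, l < n - 3 & through z (i + l).
Proof.
move=> small z_i; apply: NNPP => none.
have run := @not_through_run z i (n - 3).
have [a za a_i] := connect_first_step (A_conn z (cv i)) z_i.
apply: (small a); split=> //; exists i => l lt_l; rewrite inE.
apply: connect_trans a_i (run _ l _); last by lia.
by move=> k lt_k th; apply: none; exists k.
Qed.

Lemma center_off_cycle z : (forall a, ~ big_branch z a) -> forall j, z != cv j.
Proof.
move=> small j; apply/eqP => z_j.
have [|l lt_l] := @window_through z j.+1 small; first by rewrite z_j cv_neq_succ.
by rewrite z_j addSnnS; apply: cv_not_through; lia.
Qed.

Lemma branch_link z j r l : U z r -> U z l ->
  connect (avoid U z) r (cv j.+1) -> connect (avoid U z) l (cv j.+2) ->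
  ~ through z j.+1 -> r = l.
Proof.
move=> zr zl r_j l_j not_th; apply: (branch_eq U_sym U_irr A_acyclic zr zl _ l_j).
exact: connect_trans r_j (not_through_connect not_th).
Qed.

Lemma no_long_hole : False.
Proof.
have [z small] := exists_small_center.
have off := center_off_cycle small.
have [i [n6 P0 P2 P4 [N1 N3 N5]]] := window_hitting_pattern c_long
  (fun j => window_through small (off j)) (@through_far z).
have cv6 : cv i.+4.+2 = cv i.
  by apply: cv_mod; rewrite (_ : i.+4.+2 = i + n) ?modnDr //; lia.
rewrite addn1 in N1; rewrite addn2 in P2; rewrite addn3 in N3.
rewrite addn4 in P4; rewrite addnS addn4 in N5.
have [l0 [r0 [zl0 zr0 l0_i r0_i turn0]]] := through_turn off P0.
have [l2 [r2 [zl2 zr2 l2_i r2_i turn2]]] := through_turn off P2.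
have [l4 [r4 [zl4 zr4 l4_i r4_i turn4]]] := through_turn off P4.
rewrite -cv6 in l0_i.
rewrite (branch_link zr0 zl2 r0_i l2_i N1) in turn0.
rewrite (branch_link zr2 zl4 r2_i l4_i N3) in turn2.
rewrite (branch_link zr4 zl0 r4_i l0_i N5) in turn4.
by move: turn0 turn2 turn4; case: (A l0 z); case: (A l2 z); case: (A l4 z).
Qed.

End LongHoles.

Theorem mainTheorem11 (V : finType) (A : rel V) (tmax : nat)
    (lam : V -> V -> pred nat) :
  oriented_tree A ->
  (forall x y t, A x y -> t \in lam x y -> 1 <= t <= tmax) ->
  ~ (exists c : seq V,
       induced_cycle (conn_graph_edge A lam) c /\
       ~~ odd (size c) /\ 6 <= size c).
Proof.
move=> [_ A_irr A_anti A_conn A_acyclic] lam_bounded [[|x0 c] [c_hole [_ c_long]]] //.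
apply: (no_long_hole x0 A_irr A_anti A_conn A_acyclic _ c_hole c_long).
by move=> x y t xy /(lam_bounded _ _ _ xy)/andP[].
Qed.
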